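(* Let $V$ be a finite set of truth values and $\models_{\mathcal{D},\mathcal{D}}$ a pure consequence truth-relation on $V$ (constant expressive semantics). Then it admits exactly the same regular connectives as classical logic: a regularity rule is satisfied by some connective for $\models_{\mathcal{D},\mathcal{D}}$ iff it is satisfied by some classical connective.
   Context: $V$ contains distinct $1,0$; $\mathcal{D}\subseteq V$ with $1\in\mathcal{D}$, $0\notin\mathcal{D}$; $\gamma\models_{\mathcal{D},\mathcal{D}}\delta$ iff ($\gamma\subseteq\mathcal{D}\Rightarrow\delta\cap\mathcal{D}\neq\emptyset$). Semantics: valuations mapping atoms to $V$, connectives interpreted by fixed truth functions, extended compositionally, every assignment to finitely many distinct atoms realized; constant expressive: every value is the constant value of some formula. $\Gamma\vdash\Delta$ iff $v(\Gamma)\models v(\Delta)$ for all $v$. An $n$-ary connective $C$ is regular with rule $(\mathcal{B}^p,\mathcal{B}^c)$, $\mathcal{B}^p,\mathcal{B}^c\subseteq\mathcal{P}(\{1..n\})^2$, if for all $\Gamma,\Delta,F_1..F_n$: $\Gamma\cup\{C(\vec F)\}\vdash\Delta$ iff for all $(B_p,B_c)\in\mathcal{B}^p$, $\Gamma\cup\{F_i:i\in B_p\}\vdash\{F_i:i\in B_c\}\cup\Delta$; $\Gamma\vdash\{C(\vec F)\}\cup\Delta$ iff the same for all $(B_p,B_c)\in\mathcal{B}^c$. Classical logic: $V=\{0,1\}$ with relation $\models_{\{1\},\{1\}}$; classical connectives are truth functions $\{0,1\}^n\to\{0,1\}$. *)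

From mathcomp Require Import all_boot.
Set Implicit Arguments. Unset Strict Implicit. Unset Printing Implicit Defensive.

Record semantics (V : Type) := Semantics {
  conn : nat -> Type;
  interp : forall n, conn n -> ('I_n -> V) -> V
}.

Inductive form (V : Type) (S : semantics V) : Type :=
| Atom : nat -> form S
| App : forall n, conn S n -> ('I_n -> form S) -> form S.

Fixpoint eval (V : Type) (S : semantics V) (v : nat -> V) (F : form S) : V :=
  match F with
  | Atom k => v k
  | App n c args => interp c (fun i => eval v (args i))
  end.

Definition const_expressive (V : Type) (S : semantics V) : Prop :=
  forall x : V, exists F : form S, forall v : nat -> V, eval v F = x.

Definition truth_rel (V : Type) (D : V -> bool) (gamma delta : V -> Prop) : Prop :=
  (forall x, gamma x -> D x) -> exists2 y, delta y & D y.

Definition vimg (V : Type) (S : semantics V) (v : nat -> V) (G : form S -> Prop)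
  : V -> Prop := fun x => exists2 F, G F & eval v F = x.

Definition cons (V : Type) (D : V -> bool) (S : semantics V)
  (Gamma Delta : form S -> Prop) : Prop :=
  forall v : nat -> V, truth_rel D (vimg v Gamma) (vimg v Delta).

Definition setU1f (V : Type) (S : semantics V) (G : form S -> Prop) (F : form S) :=
  fun H => G H \/ H = F.
Definition setUf (V : Type) (S : semantics V) (G1 G2 : form S -> Prop) :=
  fun H => G1 H \/ G2 H.
Definition fam (V : Type) (S : semantics V) n (Fs : 'I_n -> form S) (B : {set 'I_n}) :=
  fun H => exists2 i, i \in B & H = Fs i.

Definition rule n := {set ({set 'I_n} * {set 'I_n})}.

Definition regular (V : Type) (D : V -> bool) (S : semantics V) n (c : conn S n)
  (Bp Bc : rule n) : Prop :=
  forall (Gamma Delta : form S -> Prop) (Fs : 'I_n -> form S),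
    (cons D (setU1f Gamma (App c Fs)) Delta <->
       (forall b, b \in Bp ->
          cons D (setUf Gamma (fam Fs b.1)) (setUf (fam Fs b.2) Delta)))
 /\ (cons D Gamma (setU1f Delta (App c Fs)) <->
       (forall b, b \in Bc ->
          cons D (setUf Gamma (fam Fs b.1)) (setUf (fam Fs b.2) Delta))).

(* Classical logic: V = {0,1} = bool, D = {1}. *)
Definition classD : bool -> bool := fun b => b.

From mathcomp Require Import all_boot.
From Stdlib Require Import Setoid FunctionalExtensionality.
Set Implicit Arguments. Unset Strict Implicit. Unset Printing Implicit Defensive.

(* Under a valuation, a pair (B1, B2) of a rule is satisfied when every
   premise indexed by B1 is designated and none indexed by B2 is.  Read
   valuation by valuation, a left rule Bp says that C(F) is designated
   exactly when some pair of Bp is satisfied, and a right rule Bc that C(F)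
   is undesignated exactly when some pair of Bc is satisfied.  So a rule is
   realisable iff Bp and Bc are complementary on every designation pattern
   d : 'I_n -> bool: necessity tests regularity on constant formulas
   realising d, sufficiency interprets C as "one if Bp is satisfied, else
   zero".  This criterion does not mention V, so V and bool admit the same
   rules. *)

Definition pair_sat n (b : {set 'I_n} * {set 'I_n}) (d : 'I_n -> bool) : bool :=
  [forall i in b.1, d i] && [forall i in b.2, ~~ d i].

Definition rule_sat n (B : rule n) (d : 'I_n -> bool) : bool :=
  [exists b in B, pair_sat b d].

Definition complementary n (Bp Bc : rule n) : Prop :=
  forall d, rule_sat Bp d = ~~ rule_sat Bc d.

Lemma rule_sat_imply n (B : rule n) d (P : Prop) :
  (rule_sat B d -> P) <-> (forall b, b \in B -> pair_sat b d -> P).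
Proof.
split=> [H b bB bd | H /existsP [b /andP [bB bd]]]; last exact: H bB bd.
by apply: H; apply/existsP; exists b; rewrite bB.
Qed.

Section Sequents.

Variables (V : Type) (D : V -> bool) (S : semantics V).
Implicit Types (v : nat -> V) (Gamma Delta : form S -> Prop).

Definition valid_at v Gamma Delta : Prop :=
  (forall F, Gamma F -> D (eval v F)) -> exists2 F, Delta F & D (eval v F).

Definition designation v n (Fs : 'I_n -> form S) : 'I_n -> bool :=
  fun i => D (eval v (Fs i)).

Lemma consE Gamma Delta : cons D Gamma Delta <-> forall v, valid_at v Gamma Delta.
Proof.
split=> H v HG.
- have [|_ [F DF <-] DFv] := H v; first by move=> _ [F GF <-]; exact: HG.
  by exists F.
- have [|F DF DFv] := H v; first by move=> F GF; apply: HG; exists F.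
  by exists (eval v F) => //; exists F.
Qed.

Lemma valid_at_empty v : ~ valid_at v (fun _ => False) (fun _ => False).
Proof. by move=> H; have [] := H (fun _ => False_ind _). Qed.

Lemma valid_at_addl v Gamma Delta G :
  valid_at v (setU1f Gamma G) Delta <-> (D (eval v G) -> valid_at v Gamma Delta).
Proof.
split=> [H DG HG | H HG]; first by apply: H => F [/HG | ->].
by apply: H => [|F GF]; apply: HG; [right | left].
Qed.

Lemma valid_at_addr v Gamma Delta G :
  valid_at v Gamma (setU1f Delta G) <-> (~~ D (eval v G) -> valid_at v Gamma Delta).
Proof.
split=> [H nDG /H [F [DF | ->] DFv] | H HG]; first by exists F.
  by rewrite DFv in nDG.
case DG: (D (eval v G)); first by exists G; [right|].
by have [F DF DFv] := H (negbT DG) HG; exists F; first left.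
Qed.

Lemma valid_at_fam v Gamma Delta n (Fs : 'I_n -> form S) b :
  valid_at v (setUf Gamma (fam Fs b.1)) (setUf (fam Fs b.2) Delta)
  <-> (pair_sat b (designation v Fs) -> valid_at v Gamma Delta).
Proof.
split=> [H /andP [/forallP d1 /forallP nd2] HG | H HG].
  have [F [/HG // | [i i1 ->]] | F [[i i2 ->] | DF] DFv] := H.
  - exact: implyP (d1 i) i1.
  - by have := implyP (nd2 i) i2; rewrite /designation DFv.
  - by exists F.
have [/existsP [i /andP [i2 di]] | nd2] := boolP [exists i in b.2, designation v Fs i].
  by exists (Fs i); first by left; exists i.
have sat_b : pair_sat b (designation v Fs).
  apply/andP; split; apply/forallP=> i; apply/implyP=> ib.
    by apply: HG; right; exists i.
  by apply: contra nd2 => di; apply/existsP; exists i; rewrite ib.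
have [F DF DFv] := H sat_b (fun F GF => HG F (or_introl GF)).
by exists F; first right.
Qed.

Lemma cons_rule_iff n (B : rule n) (Fs : 'I_n -> form S) Gamma Delta Gamma' Delta' :
  (forall v, valid_at v Gamma' Delta'
             <-> (rule_sat B (designation v Fs) -> valid_at v Gamma Delta)) ->
  cons D Gamma' Delta'
  <-> forall b, b \in B -> cons D (setUf Gamma (fam Fs b.1)) (setUf (fam Fs b.2) Delta).
Proof.
move=> Hv; rewrite consE; split=> H.
  move=> b bB; apply/consE => v; apply/valid_at_fam.
  by move/Hv/rule_sat_imply: (H v); apply.
move=> v; apply/Hv/rule_sat_imply => b bB; apply/valid_at_fam.
by move/consE: (H b bB); apply.
Qed.

Lemma regular_of_designation n (c : conn S n) (Bp Bc : rule n) :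
  complementary Bp Bc ->
  (forall v Fs, D (eval v (App c Fs)) = rule_sat Bp (designation v Fs)) ->
  regular D c Bp Bc.
Proof.
move=> comp Dc Gamma Delta Fs; split; apply: cons_rule_iff => v.
  by rewrite valid_at_addl Dc.
by rewrite valid_at_addr Dc comp negbK.
Qed.

Lemma eval_App_const n (c : conn S n) (Fs : 'I_n -> form S) :
  (forall i v w, eval v (Fs i) = eval w (Fs i)) ->
  forall v w, eval v (App c Fs) = eval w (App c Fs).
Proof.
move=> cFs v w /=; congr (interp c _).
by apply: functional_extensionality => i; exact: cFs.
Qed.

Lemma const_expressive_designation (one zero : V) :
  D one -> ~~ D zero -> const_expressive S ->
  forall n (d : 'I_n -> bool), exists Fs : 'I_n -> form S,
    (forall v, designation v Fs = d) /\ (forall i v w, eval v (Fs i) = eval w (Fs i)).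
Proof.
move=> D1 D0 CE n d; have [[F1 F1E] [F0 F0E]] := (CE one, CE zero).
exists (fun i => if d i then F1 else F0); split.
  move=> v; apply: functional_extensionality => i; rewrite /designation.
  by case: (d i); rewrite ?F1E ?F0E // (negbTE D0).
by move=> i v w; case: (d i); rewrite ?F1E ?F0E.
Qed.

Lemma cons_addl_empty (G : form S) :
  cons D (setU1f (fun _ => False) G) (fun _ => False) <-> forall v, ~~ D (eval v G).
Proof.
rewrite consE; split=> H v.
  by apply/negP => DG; have /valid_at_addl/(_ DG) := H v; apply: valid_at_empty.
by apply/valid_at_addl; rewrite (negbTE (H v)).
Qed.

Lemma cons_addr_empty (G : form S) :
  cons D (fun _ => False) (setU1f (fun _ => False) G) <-> forall v, D (eval v G).
Proof.
rewrite consE; split=> H v.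
  by apply/negPn/negP => nDG; have /valid_at_addr/(_ nDG) := H v; apply: valid_at_empty.
by apply/valid_at_addr; rewrite H.
Qed.

Lemma cons_fam_pattern (v0 : nat -> V) n (Fs : 'I_n -> form S) d (B : rule n) :
  (forall v, designation v Fs = d) ->
  (forall b, b \in B ->
     cons D (setUf (fun _ => False) (fam Fs b.1)) (setUf (fam Fs b.2) (fun _ => False)))
  <-> ~~ rule_sat B d.
Proof.
move=> dFs; split=> [H | /negP nsat b bB].
  apply/negP/rule_sat_imply => b bB sat_b.
  have /consE/(_ v0)/valid_at_fam := H b bB.
  by rewrite dFs => /(_ sat_b); apply: valid_at_empty.
apply/consE => v; apply/valid_at_fam; rewrite dFs => sat_b.
by case: nsat; apply/existsP; exists b; rewrite bB.
Qed.

Lemma regular_complementary (one zero : V) n (c : conn S n) (Bp Bc : rule n) :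
  D one -> ~~ D zero -> const_expressive S -> regular D c Bp Bc -> complementary Bp Bc.
Proof.
move=> D1 D0 CE Hreg d.
have [Fs [dFs cFs]] := const_expressive_designation D1 D0 CE d.
have [Hl Hr] := Hreg (fun _ => False) (fun _ => False) Fs.
pose v0 : nat -> V := fun _ => one.
have cG v : eval v (App c Fs) = eval v0 (App c Fs) by apply: eval_App_const.
have pattern B := cons_fam_pattern v0 B dFs.
have <- : D (eval v0 (App c Fs)) = rule_sat Bp d.
  apply: negb_inj; apply/idP/idP => [nDG | /pattern/Hl/cons_addl_empty]; last by apply.
  by apply/pattern/Hl/cons_addl_empty => v; rewrite cG.
apply/idP/idP => [DG | /pattern/Hr/cons_addr_empty]; last by apply.
by apply/pattern/Hr/cons_addr_empty => v; rewrite cG.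
Qed.

End Sequents.

Section RuleConnective.

Variables (V : Type) (D : V -> bool) (one zero : V) (n : nat) (Bp : rule n).

Inductive rule_conn : nat -> Type :=
| Const : V -> rule_conn 0
| Rule : rule_conn n.

Definition rule_interp m (k : rule_conn m) : ('I_m -> V) -> V :=
  match k with
  | Const x => fun _ => x
  | Rule => fun args => if rule_sat Bp (D \o args) then one else zero
  end.

Definition rule_semantics : semantics V := Semantics rule_interp.

Lemma rule_semantics_const_expressive : const_expressive rule_semantics.
Proof. by move=> x; exists (@App _ rule_semantics 0 (Const x) (fun _ => Atom _ 0)). Qed.

Lemma rule_semantics_designation : D one -> ~~ D zero ->
  forall v (Fs : 'I_n -> form rule_semantics),
    D (eval v (@App _ rule_semantics n Rule Fs)) = rule_sat Bp (designation D v Fs).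
Proof. by move=> D1 D0 v Fs /=; case: ifP; rewrite ?D1 ?(negbTE D0). Qed.

End RuleConnective.

Lemma regular_connective_exists_iff (V : Type) (D : V -> bool) (one zero : V)
  n (Bp Bc : rule n) : D one -> ~~ D zero ->
  (exists (S : semantics V) (c : conn S n), const_expressive S /\ regular D c Bp Bc)
  <-> complementary Bp Bc.
Proof.
move=> D1 D0; split=> [[S [c [CE Hreg]]] | comp].
  exact: regular_complementary D1 D0 CE Hreg.
exists (rule_semantics D one zero Bp), (Rule V n); split.
  exact: rule_semantics_const_expressive.
exact/(regular_of_designation comp)/rule_semantics_designation.
Qed.

Theorem theorem6p2 (V : finType) (D : V -> bool) (one zero : V)
  (Hneq : one != zero) (H1 : D one) (H0 : ~~ D zero)
  (n : nat) (Bp Bc : rule n) :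
  (exists (S : semantics V) (c : conn S n),
      const_expressive S /\ regular D c Bp Bc)
  <->
  (exists (S : semantics bool) (c : conn S n),
      const_expressive S /\ regular classD c Bp Bc).
Proof.
rewrite (regular_connective_exists_iff _ _ H1 H0).
by rewrite (@regular_connective_exists_iff bool classD true false).
Qed.
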